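(* If $G$ is a cyclically $4$-edge-connected cubic bipartite graph with at least $8$ vertices, then every edge of $G$ is contained in at least $3$ perfect matchings of $G$.
   Context: An edge-cut $E(A,B)$ is cyclic if both $G[A]$ and $G[B]$ contain a cycle; $G$ is cyclically $4$-edge-connected if it has no cyclic edge-cut with fewer than four edges. *)

From mathcomp Require Import all_boot.
Set Implicit Arguments. Unset Strict Implicit. Unset Printing Implicit Defensive.

Section Graphs.
Variables (V : finType) (adj : rel V).

Definition simple_graph : Prop := symmetric adj /\ irreflexive adj.

Definition nbhd (v : V) : {set V} := [set u | adj v u].
Definition cubic : Prop := forall v : V, #|nbhd v| = 3.

Definition bipartite : Prop :=
  exists c : V -> bool, forall u v, adj u v -> c u != c v.

Definition has_cycle_in (A : {set V}) : Prop :=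
  exists p : seq V, [/\ 3 <= size p, uniq p, cycle adj p & all (mem A) p].

(* number of edges of the edge-cut E(A, V \ A) (each edge counted once, as the
   ordered pair (a, b) with a in A and b outside A) *)
Definition cut_size (A : {set V}) : nat :=
  #|[set p : V * V | [&& p.1 \in A, p.2 \notin A & adj p.1 p.2]]|.

Definition cyc4_edge_connected : Prop :=
  forall A : {set V}, has_cycle_in A -> has_cycle_in (~: A) -> 4 <= cut_size A.

Definition is_edge (e : {set V}) : bool :=
  [exists u, exists v, adj u v && (e == [set u; v])].

Definition perfect_matching (M : {set {set V}}) : bool :=
  [forall e in M, is_edge e] &&
  [forall v, #|[set e in M | v \in e]| == 1].

Definition num_pm_containing (u v : V) : nat :=
  #|[set M : {set {set V}} | perfect_matching M && ([set u; v] \in M)]|.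

End Graphs.

From mathcomp Require Import all_boot zify.
Set Implicit Arguments. Unset Strict Implicit. Unset Printing Implicit Defensive.

(* Pick a vertex w not adjacent to u or v; it exists as |V| >= 8 and both
   neighbourhoods have size 3.  For each neighbour y of w, the disjoint edges uv
   and wy extend to a perfect matching: by Hall's theorem it suffices that every
   set S in the colour class of u, avoiding u and w, has at least |S| neighbours
   other than v and y.  Otherwise S together with its neighbourhood T spans an
   edge-cut of size at most 3(|T| - |S|) <= 3, and a degree count in the cubic
   graph shows that both sides of this cut contain a cycle, contradicting cyclic
   4-edge-connectivity.  The three matchings differ at w. *)

Section Hall.
Variables (T : finType) (r : rel T).

Definition rneighbours (Y S : {set T}) : {set T} := [set y in Y | [exists s in S, r s y]].

Definition hall_condition (X Y : {set T}) : Prop :=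
  forall S : {set T}, S \subset X -> #|S| <= #|rneighbours Y S|.

Definition matching_fun (X Y : {set T}) (f : T -> T) : Prop :=
  {in X &, injective f} /\ forall z, z \in X -> f z \in Y /\ r z (f z).

Lemma rneighbours_sub (Y S : {set T}) : rneighbours Y S \subset Y.
Proof. by apply/subsetP=> y; rewrite inE => /andP[]. Qed.

Lemma matching_fun_glue (S X Y1 Y : {set T}) (f1 f2 : T -> T) :
  S \subset X -> Y1 \subset Y ->
  matching_fun S Y1 f1 -> matching_fun (X :\: S) (Y :\: Y1) f2 ->
  matching_fun X Y (fun z => if z \in S then f1 z else f2 z).
Proof.
move=> sSX sY1Y [inj1 h1] [inj2 h2].
have h2' z : z \in X -> z \notin S -> f2 z \notin Y1 /\ f2 z \in Y /\ r z (f2 z).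
  by move=> zX zS; have := h2 z; rewrite !inE zS zX => /(_ isT) [/andP[-> ->] ->].
split=> [a b aX bX /= | z zX /=].
  case: (boolP (a \in S)) => aS; case: (boolP (b \in S)) => bS.
  - exact: inj1.
  - by move=> eab; have [+ _] := h2' b bX bS; rewrite -eab (h1 a aS).1.
  - by move=> eab; have [+ _] := h2' a aX aS; rewrite eab (h1 b bS).1.
  - by apply: inj2; rewrite inE ?aS ?bS.
case: (boolP (z \in S)) => zS; last by have [_] := h2' z zX zS.
by have [/(subsetP sY1Y) ? ?] := h1 z zS.
Qed.

Lemma hall_condition_tight (X Y S0 : {set T}) :
  hall_condition X Y -> S0 \subset X -> #|rneighbours Y S0| <= #|S0| ->
  hall_condition S0 (rneighbours Y S0) /\
  hall_condition (X :\: S0) (Y :\: rneighbours Y S0).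
Proof.
move=> hallXY sS0X tight; split=> S sS.
  have -> : rneighbours (rneighbours Y S0) S = rneighbours Y S.
    apply/setP=> y; rewrite !inE -andbA.
    case ryS: [exists s in S, r s y]; rewrite ?andbF // !andbT.
    case: (y \in Y) => //; move/existsP: ryS => [s /andP[sS' rs]].
    by apply/existsP; exists s; rewrite (subsetP sS).
  exact/hallXY/(subset_trans sS).
have dSS0 : [disjoint S & S0].
  by rewrite disjoints_subset (subset_trans sS) // setDE subsetIr.
have sSS0X : S :|: S0 \subset X by rewrite subUset sS0X (subset_trans sS) ?subsetDl.
have cover : rneighbours Y (S :|: S0) \subset
             rneighbours (Y :\: rneighbours Y S0) S :|: rneighbours Y S0.
  apply/subsetP=> y; rewrite !inE => /andP[yY /existsP[s /andP[sSS0 rs]]].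
  rewrite yY /=; case E0: [exists s0 in S0, r s0 y]; rewrite ?orbT //= orbF.
  apply/existsP; exists s; rewrite rs andbT.
  move: sSS0; rewrite inE => /orP[// | sS0].
  by move/negbT/existsPn/(_ s): E0; rewrite sS0 rs.
have := leq_trans (hallXY _ sSS0X) (leq_trans (subset_leq_card cover) (leq_card_setU _ _).1).
by move: dSS0; rewrite -(leq_card_setU S S0).2 => /eqP ->; lia.
Qed.

Lemma hall_condition_slack (X Y : {set T}) (x0 y0 : T) :
  (forall S : {set T}, S \proper X -> S != set0 -> #|S| < #|rneighbours Y S|) ->
  x0 \in X -> hall_condition (X :\ x0) (Y :\ y0).
Proof.
move=> slack x0X S sSX.
have [-> | nS] := eqVneq S set0; first by rewrite cards0.
have pSX : S \proper X.
  rewrite properEneq (subset_trans sSX) ?subsetDl // andbT.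
  by apply/eqP=> eSX; have := subsetP sSX x0; rewrite eSX x0X !inE eqxx => /(_ isT).
have -> : rneighbours (Y :\ y0) S = rneighbours Y S :\ y0.
  by apply/setP=> y; rewrite !inE andbA.
by have := slack S pSX nS; rewrite (cardsD1 y0 (rneighbours Y S)); lia.
Qed.

Theorem hall_marriage (X Y : {set T}) : hall_condition X Y -> exists f, matching_fun X Y f.
Proof.
move: {2}#|X| (leqnn #|X|) => n; elim: n X Y => [|n IH] X Y cardX hallXY.
  have -> : X = set0 by apply/cards0_eq; lia.
  by exists id; split=> // z; rewrite inE.
have [|slack] := boolP [exists S0 : {set T},
  [&& S0 \proper X, S0 != set0 & #|rneighbours Y S0| <= #|S0|]].
  case/existsP=> S0 /and3P[pS0X nS0 tight].
  have sS0X := proper_sub pS0X.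
  have [hall1 hall2] := hall_condition_tight hallXY sS0X tight.
  have [f1 m1] : exists f, matching_fun S0 (rneighbours Y S0) f.
    by apply: IH hall1; have := proper_card pS0X; lia.
  have [f2 m2] : exists f, matching_fun (X :\: S0) (Y :\: rneighbours Y S0) f.
    by apply: IH hall2; rewrite cardsDS //; move: nS0; rewrite -card_gt0; lia.
  by eexists; apply: matching_fun_glue m1 m2; rewrite ?rneighbours_sub.
have [-> | [x0 x0X]] := set_0Vmem X; first by exists id; split=> // z; rewrite inE.
have : 0 < #|rneighbours Y [set x0]|.
  by apply: leq_trans (hallXY _ _); rewrite ?cards1 ?sub1set.
rewrite card_gt0 => /set0Pn[y0]; rewrite !inE => /andP[y0Y /existsP[s /andP[]]].
rewrite inE => /eqP-> rx0y0.
have slack' (S : {set T}) : S \proper X -> S != set0 -> #|S| < #|rneighbours Y S|.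
  move=> pSX nS; rewrite ltnNge; apply: contraNN slack => tight.
  by apply/existsP; exists S; apply/and3P.
have [f2 m2] : exists f, matching_fun (X :\ x0) (Y :\ y0) f.
  by apply: IH (hall_condition_slack y0 slack' x0X); rewrite (cardsD1 x0) x0X in cardX.
eexists; apply: (matching_fun_glue (f1 := fun _ => y0)) m2; rewrite ?sub1set //.
by split=> [a b /set1P-> /set1P-> | z /set1P->]; rewrite ?set11.
Qed.

End Hall.

Section Degrees.
Variables (V : finType) (adj : rel V).
Hypothesis sym : symmetric adj.
Hypothesis irr : irreflexive adj.

Definition deg (B : {set V}) (a : V) : nat := #|[set b in B | adj a b]|.

Lemma deg_adj (B : {set V}) a : deg B a = \sum_(b in B) (adj a b : nat).
Proof.
by rewrite /deg -sum1dep_card big_mkcondr /=; apply: eq_bigr => b _; case: adj.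
Qed.

Lemma deg_sumC (A B : {set V}) : \sum_(a in A) deg B a = \sum_(b in B) deg A b.
Proof.
under eq_bigr do rewrite deg_adj.
under [RHS]eq_bigr do rewrite deg_adj.
rewrite exchange_big; apply: eq_bigr => b _.
by apply: eq_bigr => a _; rewrite sym.
Qed.

Lemma deg_eq0 (B : {set V}) a : (forall b, adj a b -> b \notin B) -> deg B a = 0.
Proof.
move=> nB; apply/eqP; rewrite cards_eq0; apply/eqP/setP=> b; rewrite !inE.
by case ab: (adj a b); rewrite ?andbF // andbT; apply/negbTE/nB.
Qed.

Lemma deg_le_card (A : {set V}) a : deg A a <= #|A :\ a|.
Proof.
apply: subset_leq_card; apply/subsetP=> b; rewrite !inE => /andP[-> ab]; rewrite andbT.
by apply: contraTneq ab => ->; rewrite irr.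
Qed.

Lemma deg_sum_setD1 (A : {set V}) a : a \in A ->
  \sum_(z in A) deg A z = 2 * deg A a + \sum_(z in A :\ a) deg (A :\ a) z.
Proof.
move=> aA; rewrite (bigD1 a aA) /=.
have ->: \sum_(z in A | z != a) deg A z =
         \sum_(z in A | z != a) ((adj z a : nat) + deg (A :\ a) z).
  apply: eq_bigr => z /andP[zA za]; rewrite /deg (cardsD1 a) !inE aA /=.
  by congr (_ + _); apply: eq_card => b; rewrite !inE andbA.
rewrite big_split /=.
have ->: \sum_(z in A | z != a) (adj z a : nat) = deg A a.
  by rewrite deg_adj (bigD1 a aA) /= irr; apply: eq_bigr => z _; rewrite sym.
rewrite (eq_bigl (fun z => z \in A :\ a)) => [|z]; last by rewrite !inE andbC.
by rewrite addnA addnn mul2n.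
Qed.

Lemma has_cycle_inS (A B : {set V}) :
  A \subset B -> has_cycle_in adj A -> has_cycle_in adj B.
Proof.
move=> sAB [p [size_p uniq_p cycle_p pA]]; exists p; split=> //.
by apply: sub_all pA => z; apply: (subsetP sAB).
Qed.

Lemma has_cycle_of_closed_path (A : {set V}) x s :
  uniq (x :: s) -> path adj x s -> all (mem A) (x :: s) -> 2 <= deg A x ->
  (forall y, y \in A -> adj x y -> y \in x :: s) -> has_cycle_in adj A.
Proof.
move=> U P Al D N; case: s U P Al N => [|x1 t] U P Al N.
  have /set0Pn[y] : [set y in A | adj x y] != set0 by rewrite -card_gt0 (leq_trans _ D).
  rewrite !inE => /andP[yA xy]; have := N y yA xy.
  by rewrite inE => /eqP yx; rewrite yx irr in xy.
have /set0Pn[y] : [set y in A | adj x y] :\ x1 != set0.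
  by rewrite -card_gt0; move: D; rewrite /deg (cardsD1 x1); lia.
rewrite !inE => /and3P[yx1 yA xy].
have : y \in t.
  have := N y yA xy; rewrite !inE => /or3P[/eqP yx | /eqP yx1' | //].
    by rewrite yx irr in xy.
  by rewrite yx1' eqxx in yx1.
move=> yt; clear N; move: U P Al; case/splitPr: yt => t1 t2 U P Al.
have split_p : x :: x1 :: t1 ++ y :: t2 = (x :: x1 :: rcons t1 y) ++ t2.
  by rewrite /= cat_rcons.
exists (x :: x1 :: rcons t1 y); split.
- by rewrite /= size_rcons.
- by move: U; rewrite split_p cat_uniq => /andP[].
- move: P; rewrite /= -cat_rcons cat_path => /and3P[-> P _].
  by rewrite rcons_path P last_rcons sym xy.
- by move: Al; rewrite split_p all_cat => /andP[].
Qed.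

Lemma has_cycle_of_min_deg (A : {set V}) :
  (forall a, a \in A -> 2 <= deg A a) -> A != set0 -> has_cycle_in adj A.
Proof.
move=> mindeg /set0Pn[x0 x0A].
(* Extend an A-path at its head until all A-neighbours of the head lie on it. *)
suff ext n x s : #|V| - size s <= n -> uniq (x :: s) -> path adj x s ->
    all (mem A) (x :: s) -> has_cycle_in adj A.
  by apply: (ext #|V| x0 [::]); rewrite ?leq_subr //= x0A.
elim: n x s => [|n IH] x s bound U P Al;
  (have [/existsP[y /and3P[yA xy ynot]] | /existsPn saturated] :=
     boolP [exists y, [&& y \in A, adj x y & y \notin x :: s]];
   last apply: (has_cycle_of_closed_path U P Al);
   [ | exact/mindeg/(allP Al)/mem_head
     | by move=> y yA xy; move: (saturated y); rewrite yA xy /= negbK]).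
- have U' : uniq (y :: x :: s) by rewrite /= ynot.
  have := max_card (mem (y :: x :: s)); rewrite (card_uniqP U') /= => /ltnW.
  by rewrite -subn_gt0 lt0n -leqn0 bound.
- apply: (IH y (x :: s)); rewrite /= ?ynot //.
  + by move: bound => /=; lia.
  + by rewrite sym xy.
  + by rewrite yA.
Qed.

Lemma has_cycle_of_deg_sum (A : {set V}) :
  A != set0 -> 2 * #|A| <= \sum_(a in A) deg A a -> has_cycle_in adj A.
Proof.
move: {2}#|A| (leqnn #|A|) => n; elim: n A => [|n IH] A cardA nA sumA.
  by move: nA; rewrite -card_gt0; lia.
have [/existsP[a /andP[aA deg_a]] | /existsPn mindeg] := boolP [exists a in A, deg A a <= 1].
  apply: (has_cycle_inS (subsetDl A [set a])).
  have cardA1 := cardsD1 a A; rewrite aA add1n in cardA1.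
  have deg_le := deg_le_card A a; rewrite (deg_sum_setD1 aA) in sumA.
  have nAa : A :\ a != set0.
    apply: contraTneq sumA => Aa0; move: deg_le cardA1.
    by rewrite Aa0 big_set0 cards0 => ? ?; lia.
  by apply: IH; lia.
by apply: (has_cycle_of_min_deg _ nA) => a aA; have := mindeg a; rewrite aA /= -ltnNge.
Qed.

End Degrees.

Section Cubic.
Variables (V : finType) (adj : rel V).
Hypotheses (sym : symmetric adj) (irr : irreflexive adj) (cub : cubic adj).

Lemma deg_setC (A : {set V}) a : deg adj A a + deg adj (~: A) a = 3.
Proof.
rewrite /deg -(cub a) -(cardsID A (nbhd adj a)).
by congr (_ + _); apply: eq_card => b; rewrite !inE andbC.
Qed.

Lemma cut_size_deg (A : {set V}) : cut_size adj A = \sum_(a in A) deg adj (~: A) a.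
Proof.
rewrite /cut_size -sum1dep_card.
rewrite -(pair_big_dep (fun i => i \in A) (fun i j => (j \notin A) && adj i j) (fun _ _ => 1)) /=.
by apply: eq_bigr => a _; rewrite sum1dep_card; apply: eq_card => b; rewrite !inE.
Qed.

Lemma cut_sizeC (A : {set V}) : cut_size adj (~: A) = cut_size adj A.
Proof. by rewrite !cut_size_deg setCK (deg_sumC sym). Qed.

Lemma deg_sum_cut (A : {set V}) : \sum_(a in A) deg adj A a + cut_size adj A = 3 * #|A|.
Proof.
rewrite cut_size_deg -big_split /= (eq_bigr (fun => 3)) => [|a _]; last exact: deg_setC.
by rewrite sum_nat_const mulnC.
Qed.

Lemma has_cycle_of_small_cut (A : {set V}) :
  A != set0 -> cut_size adj A <= #|A| -> has_cycle_in adj A.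
Proof.
move=> nA small; apply: (has_cycle_of_deg_sum sym irr) => //.
by have := deg_sum_cut A; lia.
Qed.

Lemma cyc4_small_cut (A : {set V}) : cyc4_edge_connected adj ->
  A != set0 -> ~: A != set0 -> cut_size adj A <= #|A| -> cut_size adj A <= #|~: A| ->
  4 <= cut_size adj A.
Proof.
move=> cyc nA nAc smallA smallAc; apply: cyc; first exact: has_cycle_of_small_cut.
by apply: has_cycle_of_small_cut; rewrite ?cut_sizeC.
Qed.

Lemma cut_size_neighbour_closed (S T : {set V}) :
  [disjoint S & T] -> (forall a b, a \in S -> adj a b -> b \in T) ->
  cut_size adj (S :|: T) + 3 * #|S| <= 3 * #|T|.
Proof.
move=> dST closed_ST.
have deg_S : \sum_(t in T) deg adj S t = 3 * #|S|.
  rewrite -(deg_sumC sym) (eq_bigr (fun => 3)) => [|s sS]; first by rewrite sum_nat_const mulnC.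
  rewrite -(cub s); apply: eq_card => b; rewrite !inE.
  by case sb: (adj s b); rewrite ?andbF ?andbT //; apply: closed_ST sb.
rewrite cut_size_deg (bigID [in S]) /= big1 => [|s /andP[_ sS]]; last first.
  by apply: deg_eq0 => b sb; rewrite !inE (closed_ST s) ?orbT.
rewrite (eq_bigl [in T]) => [|a]; last first.
  rewrite !inE; case: (boolP (a \in S)) => [aS | _]; last by rewrite andbT.
  by rewrite (disjointFr dST aS).
rewrite add0n -deg_S -big_split /= mulnC -sum_nat_const.
apply: leq_sum => t tT; rewrite -(deg_setC S t) addnC leq_add2l.
by apply: subset_leq_card; apply/subsetP => b; rewrite !inE negb_or => /andP[/andP[-> _] ->].
Qed.

End Cubic.

Section Bipartite.
Variables (V : finType) (adj : rel V) (X : {set V}).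
Hypotheses (sym : symmetric adj) (irr : irreflexive adj) (cub : cubic adj).
Hypothesis bip : forall a b, adj a b -> (a \in X) != (b \in X).

Lemma adj_side a b : adj a b -> a \in X -> b \notin X.
Proof. by move=> ab aX; have := bip ab; rewrite aX. Qed.

Lemma adj_sideC a b : adj a b -> a \notin X -> b \in X.
Proof. by move=> ab /negbTE aX; have := bip ab; rewrite aX; case: (b \in X). Qed.

Lemma bipartite_sides_card : #|X| = #|~: X|.
Proof.
have := deg_sumC sym X (~: X).
rewrite (eq_bigr (fun => 3)) => [|a aX]; last first.
  by rewrite -(deg_setC cub X a) [deg _ X _]deg_eq0 ?add0n // => b ab; apply: adj_side ab aX.
rewrite [RHS](eq_bigr (fun => 3)) => [|b]; last first.
  rewrite inE => bX; rewrite -(deg_setC cub X b) [deg _ (~: X) _]deg_eq0 ?addn0 // => a ba.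
  by rewrite inE negbK; apply: adj_sideC ba bX.
by rewrite !sum_nat_const; lia.
Qed.

Lemma hall_condition_side u w v x : cyc4_edge_connected adj ->
  u \in X -> w \in X -> u != w ->
  hall_condition adj (X :\: [set u; w]) (~: X :\: [set v; x]).
Proof.
move=> cyc uX wX uw S sS; rewrite leqNgt; apply/negP => deficient.
have sSX : S \subset X := subset_trans sS (subsetDl _ _).
set T := rneighbours adj (~: X) S.
have closed_ST a b : a \in S -> adj a b -> b \in T.
  move=> aS ab; rewrite !inE (adj_side ab (subsetP sSX a aS)) /=.
  by apply/existsP; exists a; rewrite aS ab.
have dST : [disjoint S & T].
  by rewrite disjoint_sym disjoints_subset (subset_trans (rneighbours_sub _ _ _)) // setCS.
have cardT : #|T| <= #|rneighbours adj (~: X :\: [set v; x]) S| + 2.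
  have sub : T \subset rneighbours adj (~: X :\: [set v; x]) S :|: [set v; x].
    apply/subsetP => y; rewrite !inE => /andP[-> ->].
    by case: (y == v); case: (y == x).
  apply: leq_trans (subset_leq_card sub) _; apply: leq_trans (leq_card_setU _ _).1 _.
  by rewrite leq_add2l cards2; case: (v != x).
have cutA := cut_size_neighbour_closed sym cub dST closed_ST.
have cardA : #|S :|: T| = #|S| + #|T| by apply/eqP; rewrite (leq_card_setU S T).2.
have cardAc := cardsC (S :|: T).
have cardXc := cardsC X.
have cardX := bipartite_sides_card.
have cardXS : #|S| + 2 <= #|X|.
  have sUW : [set u; w] \subset X by rewrite subUset !sub1set uX wX.
  have := subset_leq_card sUW; have := subset_leq_card sS.
  by rewrite cardsDS // cards2 uw; lia.
have nS : 0 < #|S| by move: deficient; lia.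
have := cyc4_small_cut sym irr cub (A := S :|: T) cyc; rewrite -!card_gt0; lia.
Qed.

Lemma perfect_matching_of_side_matching f :
  matching_fun adj X (~: X) f -> perfect_matching adj [set [set z; f z] | z in X].
Proof.
move=> [finj fX]; apply/andP; split.
  apply/forallP=> e; apply/implyP=> /imsetP[z zX ->].
  by apply/existsP; exists z; apply/existsP; exists (f z); rewrite (fX z zX).2 eqxx.
have f_onto : f @: X = ~: X.
  apply/eqP; rewrite eqEcard card_in_imset // -bipartite_sides_card leqnn andbT.
  by apply/subsetP=> _ /imsetP[z zX ->]; apply: (fX z zX).1.
apply/forallP=> y.
have [z0 [z0X yz0 z0_uniq]] : exists z0, [/\ z0 \in X, y \in [set z0; f z0] &
    forall z, z \in X -> y \in [set z; f z] -> z = z0].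
  have [yX | yX] := boolP (y \in X).
    exists y; split=> [||z zX]; rewrite ?set21 // !inE => /orP[/eqP -> // | /eqP yfz].
    by have := (fX z zX).1; rewrite inE -yfz yX.
  have : y \in f @: X by rewrite f_onto inE.
  case/imsetP=> z0 z0X ->; exists z0; split=> [||z zX]; rewrite ?set22 // !inE.
  case/orP=> /eqP fz0z; last exact/finj.
  by have := (fX z0 z0X).1; rewrite inE fz0z zX.
apply/cards1P; exists [set z0; f z0]; apply/setP=> e; rewrite !inE.
apply/andP/eqP=> [[/imsetP[z zX ->] yz] | ->]; last first.
  by split=> //; apply: imset_f.
by rewrite (z0_uniq z zX yz).
Qed.

Lemma extend_edge_pair u v w x : cyc4_edge_connected adj ->
  u \in X -> w \in X -> u != w -> v != x -> adj u v -> adj w x ->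
  exists M, [&& perfect_matching adj M, [set u; v] \in M & [set w; x] \in M].
Proof.
move=> cyc uX wX uw vx uv wx.
have wu : w != u by rewrite eq_sym.
have [f2 m2] := hall_marriage (hall_condition_side v x cyc uX wX uw).
pose f1 z := if z == u then v else x.
have m1 : matching_fun adj [set u; w] [set v; x] f1.
  split=> [a b | z]; rewrite /f1 !inE.
    case/orP=> /eqP-> /orP[] /eqP->; rewrite ?eqxx ?(negbTE wu) // => /eqP.
      by rewrite (negbTE vx).
    by rewrite eq_sym (negbTE vx).
  by case/orP=> /eqP->; rewrite ?eqxx ?uv // (negbTE wu) eqxx wx orbT.
have sY1 : [set v; x] \subset ~: X.
  by rewrite subUset !sub1set !inE (adj_side uv uX) (adj_side wx wX).
have sS : [set u; w] \subset X by rewrite subUset !sub1set uX wX.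
pose g z := if z \in [set u; w] then f1 z else f2 z.
have m : matching_fun adj X (~: X) g := matching_fun_glue sS sY1 m1 m2.
exists [set [set z; g z] | z in X]; rewrite perfect_matching_of_side_matching //=.
apply/andP; split; apply/imsetP.
  by exists u; rewrite // /g set21 /f1 eqxx.
by exists w; rewrite // /g set22 /f1 (negbTE wu).
Qed.

Lemma extend_disjoint_edges u v w x : cyc4_edge_connected adj -> u \in X ->
  adj u v -> adj w x -> u != w -> u != x -> v != w -> v != x ->
  exists M, [&& perfect_matching adj M, [set u; v] \in M & [set w; x] \in M].
Proof.
move=> cyc uX uv wx uw ux vw vx.
have [wX | wX] := boolP (w \in X); first exact: extend_edge_pair.
have xw : adj x w by rewrite sym.
have [M /and3P[pm uvM xwM]] := extend_edge_pair cyc uX (adj_sideC wx wX) ux vw uv xw.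
by exists M; rewrite pm uvM setUC.
Qed.

End Bipartite.

Section Counting.
Variables (V : finType) (adj : rel V).

Lemma perfect_matching_edge_unique M w y1 y2 : perfect_matching adj M ->
  [set w; y1] \in M -> [set w; y2] \in M -> y1 != w -> y1 = y2.
Proof.
move=> /andP[_ /forallP/(_ w)/cards1P[e0 Ew]] wy1M wy2M y1w.
have : [set w; y1] \in [set e0] by rewrite -Ew inE wy1M set21.
have : [set w; y2] \in [set e0] by rewrite -Ew inE wy2M set21.
rewrite !inE => /eqP E2 /eqP E1.
have : y1 \in [set w; y2] by rewrite E2 -E1 set22.
by rewrite !inE (negbTE y1w) => /eqP.
Qed.

Lemma card_nbhd_le_num_pm u v w : irreflexive adj ->
  (forall y, adj w y ->
     exists M, [&& perfect_matching adj M, [set u; v] \in M & [set w; y] \in M]) ->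
  #|nbhd adj w| <= num_pm_containing adj u v.
Proof.
move=> irr ext.
pose g y := odflt set0
  [pick M | [&& perfect_matching adj M, [set u; v] \in M & [set w; y] \in M]].
have gP y : adj w y -> [&& perfect_matching adj (g y), [set u; v] \in g y & [set w; y] \in g y].
  move=> wy; rewrite /g; case: pickP => [M -> // | none].
  by have [M PM] := ext y wy; have := none M; rewrite PM.
have g_inj : {in nbhd adj w &, injective g}.
  move=> y1 y2; rewrite !inE => wy1 wy2 g12.
  have /and3P[pm _ wy1M] := gP y1 wy1; have /and3P[_ _ wy2M] := gP y2 wy2.
  apply: (perfect_matching_edge_unique pm wy1M); first by rewrite g12.
  by apply: contraTneq wy1 => ->; rewrite irr.
rewrite /num_pm_containing -(card_in_imset g_inj); apply: subset_leq_card.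
apply/subsetP=> M /imsetP[y wy ->]; rewrite inE in wy; rewrite inE.
by have /and3P[-> -> _] := gP y wy.
Qed.

Lemma exists_nonadjacent_to_edge u v : cubic adj -> 6 < #|V| ->
  exists w, w \notin nbhd adj u :|: nbhd adj v.
Proof.
move=> cub big.
have /set0Pn[w] : ~: (nbhd adj u :|: nbhd adj v) != set0.
  rewrite -card_gt0; have := cardsC (nbhd adj u :|: nbhd adj v).
  by have := (leq_card_setU (nbhd adj u) (nbhd adj v)).1; rewrite !cub; lia.
by rewrite inE => nw; exists w.
Qed.

End Counting.

Theorem mainTheorem14 (V : finType) (adj : rel V) :
  simple_graph adj -> cubic adj -> bipartite adj ->
  cyc4_edge_connected adj -> 8 <= #|V| ->
  forall u v : V, adj u v -> 3 <= num_pm_containing adj u v.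
Proof.
move=> [sym irr] cub [c c_proper] cyc card8 u v uv.
pose X := [set z | c z == c u].
have bip a b : adj a b -> (a \in X) != (b \in X).
  by move=> ab; have := c_proper a b ab; rewrite !inE; case: (c a); case: (c b); case: (c u).
have [w] := @exists_nonadjacent_to_edge V adj u v cub (leq_trans (isT : 6 < 8) card8).
rewrite !inE negb_or => /andP[uw vw].
rewrite -(cub w); apply: (card_nbhd_le_num_pm irr) => y wy.
apply: (extend_disjoint_edges sym irr cub bip cyc); rewrite ?inE //.
- by apply: contraNneq vw => <-; rewrite sym.
- by apply: contraNneq uw => ->; rewrite sym.
- by apply: contraNneq uw => <-.
- by apply: contraNneq vw => ->; rewrite sym.
Qed.
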